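(* For every integer $n\ge 1$, the square of the path, $P_n^2$, is odd prime.
   Context: All graphs are finite and simple. A graph $G$ of order $N$ is odd prime if there is a bijection $\ell:V(G)\to\{1,3,\ldots,2N-1\}$ with $\gcd(\ell(u),\ell(v))=1$ for every edge $uv$. For a graph $G$ and $k\ge 1$, the power $G^k$ has vertex set $V(G)$, with $u\ne v$ adjacent iff their distance in $G$ is at most $k$. $P_n$ is the path on $n$ vertices. *)

From mathcomp Require Import all_boot.
Set Implicit Arguments. Unset Strict Implicit. Unset Printing Implicit Defensive.

(* A simple graph on a finite vertex type T: symmetric irreflexive relation. *)

Definition path_graph (n : nat) : rel 'I_n :=
  fun i j => (i.+1 == j :> nat) || (j.+1 == i :> nat).

Fixpoint walk_len (T : finType) (e : rel T) (m : nat) (u v : T) : bool :=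
  match m with
  | 0 => u == v
  | m'.+1 => [exists w, e u w && walk_len e m' w v]
  end.

Definition dist_le (T : finType) (e : rel T) (k : nat) (u v : T) : bool :=
  [exists m : 'I_k.+1, walk_len e m u v].

Definition graph_power (T : finType) (e : rel T) (k : nat) : rel T :=
  fun u v => (u != v) && dist_le e k u v.

Definition odd_labels (N : nat) : pred nat := fun m => odd m && (m < 2 * N).

Definition odd_prime (T : finType) (e : rel T) : Prop :=
  exists l : T -> nat,
    [/\ injective l,
        (forall x, odd_labels #|T| (l x)),
        (forall m, odd_labels #|T| m -> exists x, l x = m) &
        (forall u v, e u v -> coprime (l u) (l v))].

(* Label vertex i of P_n by 2i + 1.  Vertices adjacent in P_n^2 are at
   distance 1 or 2, so their labels differ by 2 or 4, a power of 2; two odd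
   numbers differing by a power of 2 are coprime. *)
From mathcomp Require Import all_boot.
From mathcomp Require Import zify.

Lemma walk_len_path_graph n m (u v : 'I_n) :
  walk_len (@path_graph n) m u v -> (v <= u + m) && (u <= v + m).
Proof.
elim: m u => [|m IHm] u /=; first by move=> /eqP ->; rewrite addn0 leqnn.
case/existsP=> w /andP[/orP[]/eqP uw /IHm /andP[vw wv]]; apply/andP; lia.
Qed.

Lemma graph_power_path_graph n k (u v : 'I_n) :
  graph_power (@path_graph n) k u v -> (u < v <= u + k) || (v < u <= v + k).
Proof.
case/andP=> neq_uv /existsP[m /walk_len_path_graph /andP[vu uv]].
have ltm := ltn_ord m.
have neq_uv' : (u : nat) != v by apply: contra neq_uv => /eqP/val_inj->.
lia.
Qed.

Lemma coprime_odd_add_pow2 a k : odd a -> coprime a (a + 2 ^ k).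
Proof.
by move=> odd_a; rewrite /coprime gcdnDl -/(coprime _ _) coprimeXr ?coprimen2.
Qed.

Definition odd_label (i : nat) : nat := (2 * i).+1.

Lemma odd_labelK m : odd m -> odd_label m./2 = m.
Proof. by move=> odd_m; rewrite -{2}(odd_double_half m) odd_m -muln2 mulnC. Qed.

Lemma coprime_odd_label i j :
  i < j <= i + 2 -> coprime (odd_label i) (odd_label j).
Proof.
move=> lt_ij; have [d d12 ->] : exists2 d, 0 < d < 3 & j = i + d.
  by exists (j - i); lia.
have -> : odd_label (i + d) = odd_label i + 2 ^ d.
  by rewrite /odd_label; case: d d12 => [|[|[]]] //; lia.
by apply: coprime_odd_add_pow2; rewrite /= oddM.
Qed.

Theorem theorem5p1 (n : nat) : 1 <= n ->
  odd_prime (graph_power (@path_graph n) 2).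
Proof.
move=> _; exists (fun i : 'I_n => odd_label i); rewrite card_ord; split.
- by move=> i j /eqP; rewrite eqSS eqn_pmul2l // => /eqP/val_inj.
- move=> i; apply/andP; split; first by rewrite /= oddM.
  by have := ltn_ord i; rewrite /odd_label; lia.
- move=> m /andP[odd_m lt_m]; have lt_half : m./2 < n by lia.
  by exists (Ordinal lt_half); apply: odd_labelK.
- move=> u v /graph_power_path_graph /orP[] near_uv.
    exact: coprime_odd_label.
  by rewrite coprime_sym; apply: coprime_odd_label.
Qed.
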